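(* Let $\mathcal{S}$ be a state space. Suppose there exists a state $s_0\in\mathcal{S}$ and a number $\lambda_0$ such that $e(s_0)=\lambda_0$ for all pure indecomposable effects $e$ on $\mathcal{S}$. Then $\lambda_{max}(\mathsf{M})=1/\lambda_0$ for every indecomposable measurement $\mathsf{M}$ on $\mathcal{S}$, and consequently $\lambda_{max}(\mathcal{S})=1/\lambda_0$.
   Context: General probabilistic theory setting: a state space $\mathcal{S}$ is a compact convex subset of a finite-dimensional real vector space, embedded as a base of a closed generating proper cone $V_+$ in a vector space $V$, so that $\mathcal{S}=\{x\in V_+ : u(x)=1\}$ for a strictly positive linear functional $u$ (the unit effect). An effect is a linear functional $e$ on $V$ with $0\le e(s)\le 1$ for all $s\in\mathcal{S}$; the set of effects is convex and its extreme points are called pure effects. A nonzero effect $e$ is indecomposable if whenever $e=e_1+e_2$ with $e_1,e_2$ nonzero effects, then $e=c_1e_1=c_2e_2$ for some $c_1,c_2>0$. For a linear functional $f$, $\|f\|=\max_{s\in\mathcal{S}}|f(s)|$. A measurement with finite outcome set $\Omega$ is a map $x\mapsto\mathsf{M}_x$ to effects with $\sum_x\mathsf{M}_x=u$; it is indecomposable if each of its nonzero effects is indecomposable. The decoding power is $\lambda_{max}(\mathsf{M})=\sum_x\|\mathsf{M}_x\|$, and the information storability of $\mathcal{S}$ is $\lambda_{max}(\mathcal{S})=\sup\{\lambda_{max}(\mathsf{M}) : \mathsf{M}$ a measurement on $\mathcal{S}$ with finite outcome set$\}$. *)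

From HB Require Import structures.
From mathcomp Require Import all_boot all_order all_algebra.
From mathcomp Require Import all_classical all_reals all_analysis.
Set Implicit Arguments. Unset Strict Implicit. Unset Printing Implicit Defensive.
Import Order.TTheory GRing.Theory Num.Theory.
Import numFieldNormedType.Exports.
Local Open Scope classical_set_scope.
Local Open Scope ring_scope.

(* The ambient vector space V is 'rV[R]_n; linear functionals on V are
   represented by column vectors f : 'cV[R]_n acting by x |-> x *m f. *)
Definition ev (R : realType) (n : nat) (f : 'cV[R]_n) (x : 'rV[R]_n) : R :=
  (x *m f) 0 0.

Definition gpt_cone (R : realType) (n : nat) (K : set 'rV[R]_n) (u : 'cV[R]_n) : Prop :=
  [/\ closed K,
      [/\ K 0, (forall x y, K x -> K y -> K (x + y))
         & (forall (a : R) x, 0 <= a -> K x -> K (a *: x))],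
      (forall v : 'rV[R]_n, exists x y, [/\ K x, K y & v = x - y]),
      (forall x, K x -> K (- x) -> x = 0)
    &
      (forall x, K x -> x != 0 -> 0 < ev u x)].

Definition states (R : realType) (n : nat) (K : set 'rV[R]_n) (u : 'cV[R]_n)
  : set 'rV[R]_n := [set x | K x /\ ev u x = 1].

Definition is_effect (R : realType) (n : nat) (K : set 'rV[R]_n) (u : 'cV[R]_n)
  (e : 'cV[R]_n) : Prop :=
  forall s, states K u s -> 0 <= ev e s <= 1.

Definition is_pure_effect (R : realType) (n : nat) (K : set 'rV[R]_n) (u : 'cV[R]_n)
  (e : 'cV[R]_n) : Prop :=
  is_effect K u e /\
  forall (e1 e2 : 'cV[R]_n) (t : R), is_effect K u e1 -> is_effect K u e2 ->
    0 < t < 1 -> e = t *: e1 + (1 - t) *: e2 -> e1 = e /\ e2 = e.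

Definition is_indecomposable (R : realType) (n : nat) (K : set 'rV[R]_n) (u : 'cV[R]_n)
  (e : 'cV[R]_n) : Prop :=
  is_effect K u e /\ e != 0 /\
  forall e1 e2 : 'cV[R]_n, is_effect K u e1 -> is_effect K u e2 ->
    e1 != 0 -> e2 != 0 -> e = e1 + e2 ->
    exists c1 c2 : R, 0 < c1 /\ 0 < c2 /\ e = c1 *: e1 /\ e = c2 *: e2.

Definition fnorm (R : realType) (n : nat) (K : set 'rV[R]_n) (u : 'cV[R]_n)
  (f : 'cV[R]_n) : R :=
  sup [set `|ev f s| | s in states K u].

Definition is_measurement (R : realType) (n : nat) (K : set 'rV[R]_n) (u : 'cV[R]_n)
  (Omega : finType) (M : Omega -> 'cV[R]_n) : Prop :=
  (forall x, is_effect K u (M x)) /\ \sum_(x : Omega) M x = u.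

Definition is_indecomposable_measurement (R : realType) (n : nat) (K : set 'rV[R]_n)
  (u : 'cV[R]_n) (Omega : finType) (M : Omega -> 'cV[R]_n) : Prop :=
  is_measurement K u M /\ forall x, M x != 0 -> is_indecomposable K u (M x).

Definition decoding_power (R : realType) (n : nat) (K : set 'rV[R]_n) (u : 'cV[R]_n)
  (Omega : finType) (M : Omega -> 'cV[R]_n) : R :=
  \sum_(x : Omega) fnorm K u (M x).

(* information storability, as an extended real (supremum over all
   measurements with a finite outcome set; finite outcome sets are taken
   to be 'I_m, m : nat, which covers every finite set up to bijection). *)
Definition info_storability (R : realType) (n : nat) (K : set 'rV[R]_n)
  (u : 'cV[R]_n) : \bar R :=
  ereal_sup [set (decoding_power K u (projT2 M))%:E |
     M in [set M : {m : nat & 'I_m -> 'cV[R]_n} | is_measurement K u (projT2 M)]]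
  .

From HB Require Import structures.
From mathcomp Require Import all_boot all_order all_algebra.
From mathcomp Require Import all_classical all_reals all_analysis.
From mathcomp Require Import lra.
Import Order.TTheory GRing.Theory Num.Theory.
Local Open Scope classical_set_scope.
Local Open Scope ring_scope.
Set Implicit Arguments. Unset Strict Implicit. Unset Printing Implicit Defensive.

(* Effects are the elements of the dual cone lying below u.  Since K is
   generating, the dual cone is pointed, so each of its elements is a finite
   sum of extreme rays; an extreme ray rescaled to norm 1 is a pure
   indecomposable effect, hence the hypothesis gives e(s0) = ||e|| lambda0
   for every effect e spanning an extreme ray.  Summing over an
   indecomposable measurement yields decoding_power M * lambda0 = u(s0) = 1.
   For an arbitrary measurement, split each M x into extreme rays; the
   triangle inequality gives ||M x|| lambda0 <= M x (s0), whence
   decoding_power M * lambda0 <= 1.  Splitting u itself produces an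
   indecomposable measurement, so this bound is attained. *)

Section Evaluation.
Variables (R : realType) (n : nat).
Implicit Types (f g : 'cV[R]_n) (x y : 'rV[R]_n).

Lemma evDl f g x : ev (f + g) x = ev f x + ev g x.
Proof. by rewrite /ev mulmxDr mxE. Qed.

Lemma evZl (a : R) f x : ev (a *: f) x = a * ev f x.
Proof. by rewrite /ev -scalemxAr mxE. Qed.

Lemma evNl f x : ev (- f) x = - ev f x.
Proof. by rewrite /ev mulmxN mxE. Qed.

Lemma evBl f g x : ev (f - g) x = ev f x - ev g x.
Proof. by rewrite evDl evNl. Qed.

Lemma ev0l x : ev 0 x = 0.
Proof. by rewrite /ev mulmx0 mxE. Qed.

Lemma evDr f x y : ev f (x + y) = ev f x + ev f y.
Proof. by rewrite /ev mulmxDl mxE. Qed.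

Lemma evZr (a : R) f x : ev f (a *: x) = a * ev f x.
Proof. by rewrite /ev -scalemxAl mxE. Qed.

Lemma evBr f x y : ev f (x - y) = ev f x - ev f y.
Proof. by rewrite /ev mulmxBl !mxE. Qed.

Lemma ev0r f : ev f 0 = 0.
Proof. by rewrite /ev mul0mx mxE. Qed.

Lemma ev_suml (I : Type) (r : seq I) (P : pred I) (F : I -> 'cV[R]_n) x :
  ev (\sum_(i <- r | P i) F i) x = \sum_(i <- r | P i) ev (F i) x.
Proof.
elim/big_rec2: _ => [|i y1 y2 _ IH]; first by rewrite ev0l.
by rewrite evDl IH.
Qed.

Lemma ev_sumr (I : Type) (r : seq I) (P : pred I) (F : I -> 'rV[R]_n) f :
  ev f (\sum_(i <- r | P i) F i) = \sum_(i <- r | P i) ev f (F i).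
Proof.
elim/big_rec2: _ => [|i y1 y2 _ IH]; first by rewrite ev0r.
by rewrite evDr IH.
Qed.

Lemma ev_delta f (i : 'I_n) : ev f (delta_mx 0 i) = f i 0.
Proof. by rewrite /ev -rowE mxE. Qed.

End Evaluation.

Section DualCone.
Variables (R : realType) (n : nat) (K : set 'rV[R]_n).
Implicit Types (f g h d : 'cV[R]_n) (x : 'rV[R]_n).

Definition dual_cone : set 'cV[R]_n := [set f | forall x, K x -> 0 <= ev f x].

(* The vectors dominated by f form the linear span of the smallest face of
   the dual cone containing f. *)
Definition dominated f d : Prop :=
  exists2 c : R, 0 <= c & forall x, K x -> `|ev d x| <= c * ev f x.

Definition extreme_ray f : Prop :=
  [/\ f != 0, dual_cone f &
    forall g h, dual_cone g -> dual_cone h -> f = g + h ->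
      exists2 c : R, 0 <= c & g = c *: f].

Definition sum_of_extreme_rays f : Prop :=
  exists s : seq 'cV[R]_n, f = \sum_(g <- s) g /\ forall g, g \in s -> extreme_ray g.

Lemma dual_cone0 : dual_cone 0.
Proof. by move=> x _; rewrite ev0l. Qed.

Lemma dual_coneD f g : dual_cone f -> dual_cone g -> dual_cone (f + g).
Proof. by move=> hf hg x Kx; rewrite evDl addr_ge0 ?hf ?hg. Qed.

Lemma dual_coneZ (a : R) f : 0 <= a -> dual_cone f -> dual_cone (a *: f).
Proof. by move=> a0 hf x Kx; rewrite evZl mulr_ge0 ?hf. Qed.

Lemma dual_cone_sum (I : eqType) (r : seq I) (F : I -> 'cV[R]_n) :
  (forall i, i \in r -> dual_cone (F i)) -> dual_cone (\sum_(i <- r) F i).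
Proof.
move=> hF; rewrite big_seq_cond; apply: (big_ind dual_cone).
- exact: dual_cone0.
- exact: dual_coneD.
- by move=> i /andP[/hF].
Qed.

Lemma dominated_refl f : dual_cone f -> dominated f f.
Proof. by move=> hf; exists 1 => // x Kx; rewrite mul1r ger0_norm ?hf. Qed.

Lemma dominated0 f : dual_cone f -> dominated f 0.
Proof. by move=> hf; exists 0 => // x Kx; rewrite ev0l normr0 mul0r. Qed.

Lemma dominatedD f d1 d2 : dominated f d1 -> dominated f d2 -> dominated f (d1 + d2).
Proof.
move=> [c1 c10 h1] [c2 c20 h2]; exists (c1 + c2); first exact: addr_ge0.
move=> x Kx; rewrite evDl mulrDl (le_trans (ler_normD _ _)) //.
by rewrite lerD ?h1 ?h2.
Qed.

Lemma dominatedZ f (a : R) d : dominated f d -> dominated f (a *: d).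
Proof.
move=> [c c0 h]; exists (`|a| * c); first by rewrite mulr_ge0.
by move=> x Kx; rewrite evZl normrM -mulrA ler_wpM2l ?h.
Qed.

Lemma dominatedN f d : dominated f d -> dominated f (- d).
Proof. by rewrite -scaleN1r; apply: dominatedZ. Qed.

Lemma dominated_sum f (I : Type) (r : seq I) (F : I -> 'cV[R]_n) :
  dual_cone f -> (forall i, dominated f (F i)) -> dominated f (\sum_(i <- r) F i).
Proof.
move=> hf hF; apply: (big_ind (dominated f)) => //.
- exact: dominated0.
- exact: dominatedD.
Qed.

Lemma dominated_span f (s : seq 'cV[R]_n) :
  dual_cone f -> (forall v, v \in s -> dominated f v) ->
  forall v, v \in span s -> dominated f v.
Proof.
move=> hf hs v /(coord_span (X := in_tuple s)) ->.
by apply: dominated_sum => // i; apply/dominatedZ/hs/mem_nth.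
Qed.

Lemma dominated_trans f g d (C : R) :
  0 <= C -> (forall x, K x -> ev g x <= C * ev f x) ->
  dominated g d -> dominated f d.
Proof.
move=> C0 hC [c c0 h]; exists (c * C); first by rewrite mulr_ge0.
move=> x Kx; apply: (le_trans (h x Kx)).
by rewrite -mulrA ler_wpM2l ?hC.
Qed.

Lemma free_cons_undominated g d (s : seq 'cV[R]_n) :
  dual_cone g -> ~ dominated g d -> free s -> (forall v, v \in s -> dominated g v) ->
  free (d :: s).
Proof.
move=> hg nd fs hs; rewrite free_cons fs andbT.
by apply/negP => /(dominated_span hg hs).
Qed.

Lemma dual_cone_perturb g d (c : R) :
  dual_cone g -> 0 <= c -> (forall x, K x -> `|ev d x| <= c * ev g x) ->
  dual_cone (g + (1 + c)^-1 *: d).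
Proof.
move=> hg c0 h x Kx; rewrite evDl evZl.
have gx := hg x Kx; have hx := h x Kx.
have c1 : 0 < 1 + c by lra.
have hn : - ev d x <= `|ev d x| by rewrite -normrN ler_norm.
rewrite mulrC -(@ler_pM2r _ (1 + c)) // mul0r mulrDl mulfVK ?gt_eqF //.
nra.
Qed.

Definition ray_in_dual_cone f d : set R := [set t | 0 <= t /\ dual_cone (f + t *: d)].

Lemma ray_in_dual_cone_has_sup f d :
  dual_cone f -> ~ dual_cone d -> has_sup (ray_in_dual_cone f d).
Proof.
move=> hf /existsNP [x /not_implyP [Kx /negP]]; rewrite -ltNge => dx.
split; first by exists 0; split; rewrite ?scale0r ?addr0.
exists (ev f x / - ev d x) => t [t0 ht]; have := ht x Kx.
by rewrite evDl evZl ler_pdivlMr; lra.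
Qed.

Lemma dual_cone_ray_sup f d :
  dual_cone f -> has_sup (ray_in_dual_cone f d) ->
  dual_cone (f + sup (ray_in_dual_cone f d) *: d).
Proof.
set T := ray_in_dual_cone f d => hf hsT x Kx.
rewrite evDl evZl leNgt; apply/negP => hneg.
have fx := hf x Kx.
have sup_ge0 : 0 <= sup T by apply: sup_upper_bound => //; split; rewrite ?scale0r ?addr0.
have dx : ev d x < 0 by rewrite ltNge; apply/negP => dx; nra.
pose eps := - (ev f x + sup T * ev d x) / - ev d x.
have eps0 : 0 < eps by rewrite divr_gt0; lra.
have epsE : eps * - ev d x = - (ev f x + sup T * ev d x) by rewrite mulfVK ?gt_eqF; lra.
have [t [t0 ht] tlt] := sup_adherent eps0 hsT.
by have := ht x Kx; rewrite evDl evZl; nra.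
Qed.

Lemma dual_cone_exit f d :
  dual_cone f -> dominated f d -> ~ dual_cone d ->
  exists t : R, [/\ 0 < t, dual_cone (f + t *: d), ~ dominated (f + t *: d) d &
    forall d', dominated (f + t *: d) d' -> dominated f d'].
Proof.
move=> hf [c c0 hc] nd; set T := ray_in_dual_cone f d.
have hsT : has_sup T by exact: ray_in_dual_cone_has_sup.
have T_le_sup t : T t -> t <= sup T by exact: sup_upper_bound.
have c1 : 0 < (1 + c)^-1 by rewrite invr_gt0; lra.
have sup_gt0 : 0 < sup T.
  by apply/(lt_le_trans c1)/T_le_sup; split; [exact: ltW | exact: dual_cone_perturb].
have Csup := dual_cone_ray_sup hf hsT.
exists (sup T); split => //.
- move=> [c' c'0 h']; have := dual_cone_perturb Csup c'0 h'.
  rewrite -addrA -scalerDl => Cfurther.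
  have c'1 : 0 < (1 + c')^-1 by rewrite invr_gt0; lra.
  have /T_le_sup : T (sup T + (1 + c')^-1) by split => //; lra.
  lra.
- move=> d'; apply: (dominated_trans (C := 1 + sup T * c)); first by nra.
  move=> x Kx; rewrite evDl evZl.
  by have := hc x Kx; have := ler_norm (ev d x); have := hf x Kx; nra.
Qed.

Lemma extreme_rayZ (a : R) f : 0 < a -> extreme_ray f -> extreme_ray (a *: f).
Proof.
move=> a0 [f0 hf split_f]; split.
- by rewrite scaler_eq0 negb_or f0 andbT gt_eqF.
- exact: dual_coneZ (ltW a0) hf.
move=> g h hg hh e.
have ai : 0 <= a^-1 by rewrite invr_ge0 ltW.
have e' : f = a^-1 *: g + a^-1 *: h.
  by rewrite -scalerDr -e scalerA mulVf ?scale1r ?gt_eqF.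
have [c c0 hc] := split_f _ _ (dual_coneZ ai hg) (dual_coneZ ai hh) e'.
exists c => //.
by rewrite scalerA mulrC -scalerA -hc scalerA mulfV ?scale1r ?gt_eqF.
Qed.

Lemma sum_of_extreme_rays_conic g h (a b : R) :
  0 < a -> 0 < b -> sum_of_extreme_rays g -> sum_of_extreme_rays h ->
  sum_of_extreme_rays (a *: g + b *: h).
Proof.
move=> a0 b0 [sg [-> xg]] [sh [-> xh]].
exists (map ( *:%R a) sg ++ map ( *:%R b) sh); split.
  by rewrite big_cat !big_map -!scaler_sumr.
move=> e; rewrite mem_cat => /orP[] /mapP[e' e's ->]; apply: extreme_rayZ => //.
- exact: xg.
- exact: xh.
Qed.

Section PointedDual.
Variable u : 'cV[R]_n.
Hypothesis hK : gpt_cone K u.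

(* x0 = \sum_i (a i + b i) where delta_mx 0 i = a i - b i with a i, b i in K:
   a dual functional vanishing at x0 vanishes at every a i and b i. *)
Lemma exists_faithful_point :
  exists2 x0, K x0 & forall f, dual_cone f -> ev f x0 = 0 -> f = 0.
Proof.
case: hK => _ [K0 KD _] Kgen _ _.
have [a /choice [b Hab]] := choice (fun i : 'I_n => Kgen (delta_mx 0 i)).
exists (\sum_i (a i + b i)).
  by apply: (big_ind K) => // i _; case: (Hab i) => *; apply: KD.
move=> f hf; rewrite ev_sumr => /eqP; rewrite psumr_eq0 => [/allP f0|i _].
  apply/matrixP => i j; rewrite (ord1 j) mxE -ev_delta.
  have [Ka Kb ->] := Hab i; have := f0 i (mem_index_enum i).
  by rewrite evBr evDr; have := hf _ Ka; have := hf _ Kb; lra.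
by have [Ka Kb _] := Hab i; rewrite evDr addr_ge0 ?hf.
Qed.

Lemma dual_cone_pointed f : dual_cone f -> dual_cone (- f) -> f = 0.
Proof.
move=> hf hNf; have [x0 Kx0 faithful] := exists_faithful_point.
apply: faithful => //; have := hf _ Kx0; have := hNf _ Kx0; rewrite evNl; lra.
Qed.

Lemma dual_cone_scale_ge0 f (a : R) :
  dual_cone f -> f != 0 -> dual_cone (a *: f) -> 0 <= a.
Proof.
move=> hf f0 haf; rewrite leNgt; apply/negP => a0.
suff /(dual_cone_pointed hf) /eqP : dual_cone (- f) by rewrite (negPf f0).
have -> : - f = (- a)^-1 *: (a *: f).
  by rewrite scalerA mulrC invrN mulrN mulfV ?scaleN1r ?lt_eqF.
by apply: dual_coneZ haf; rewrite invr_ge0 oppr_ge0 ltW.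
Qed.

Lemma extreme_ray_dominated f :
  dual_cone f -> f != 0 -> (forall d, dominated f d -> exists a, d = a *: f) ->
  extreme_ray f.
Proof.
move=> hf f0 multiples; split => // g h hg hh fgh.
have [|a ga] := multiples g.
  exists 1 => // x Kx; rewrite mul1r fgh evDl ger0_norm ?hg //.
  by rewrite lerDl hh.
by exists a => //; apply: dual_cone_scale_ge0 hf f0 _; rewrite -ga.
Qed.

Lemma exists_two_sided_direction f d :
  dual_cone f -> f != 0 -> dominated f d -> (forall a, d <> a *: f) ->
  exists d', [/\ dominated f d', ~ dual_cone d' & ~ dual_cone (- d')].
Proof.
move=> hf f0 fd nmul; have [x0 Kx0 faithful] := exists_faithful_point.
have fx0 : 0 < ev f x0.
  by rewrite lt0r hf // andbT; apply: contra f0 => /eqP /(faithful _ hf) ->.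
pose d' := d - (ev d x0 / ev f x0) *: f.
have d'x0 : ev d' x0 = 0 by rewrite evBl evZl mulfVK ?subrr ?gt_eqF.
have d'0 : d' <> 0.
  by move/eqP; rewrite subr_eq0 => /eqP; apply: nmul.
exists d'; split.
- by apply/dominatedD/dominatedN/dominatedZ/dominated_refl.
- by move/faithful => /(_ d'x0).
- move/faithful; rewrite evNl d'x0 oppr0 => /(_ erefl) /eqP.
  by rewrite oppr_eq0 => /eqP.
Qed.

(* Induction on a bound for the size of free families dominated by f: if f is
   not an extreme ray, f is a positive combination of the two points where
   the line through f in a two-sided direction d' leaves the dual cone, and
   at both points d' (or - d') is no longer dominated. *)
Lemma sum_of_extreme_rays_dominated_free (k : nat) f :
  dual_cone f ->
  (forall s : seq 'cV[R]_n, free s -> (forall v, v \in s -> dominated f v) ->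
     (size s <= k)%N) ->
  sum_of_extreme_rays f.
Proof.
elim: k f => [|k IH] f hf bound; have [->|f0] := eqVneq f 0;
  try by exists [::]; rewrite big_nil.
  suff : (size [:: f] <= 0)%N by [].
  apply: bound; first by rewrite seq1_free.
  by move=> v; rewrite inE => /eqP ->; apply: dominated_refl.
have [multiples|] := pselect (forall d, dominated f d -> exists a, d = a *: f).
  exists [:: f]; rewrite big_seq1; split => // g; rewrite inE => /eqP ->.
  exact: extreme_ray_dominated.
move=> /existsNP [d /not_implyP [fd nmul]].
have {nmul} nmul a : d <> a *: f by move=> e; apply: nmul; exists a.
have [d' [fd' nd' nNd']] := exists_two_sided_direction hf f0 fd nmul.
have exit_decomp e : dominated f e -> ~ dual_cone e ->
    exists2 t : R, 0 < t & sum_of_extreme_rays (f + t *: e).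
  move=> fe ne; have [t [t0 Ct nDt mono]] := dual_cone_exit hf fe ne.
  exists t => //; apply: IH => // s fs sD.
  have := bound _ (free_cons_undominated Ct nDt fs sD); apply.
  by move=> v; rewrite inE => /orP[/eqP -> // | /sD /mono].
have [tp tp0 Dp] := exit_decomp _ fd' nd'.
have [tm tm0 Dm] := exit_decomp _ (dominatedN fd') nNd'.
have tpm : tp + tm != 0 by rewrite gt_eqF ?addr_gt0.
suff -> : f = (tm / (tp + tm)) *: (f + tp *: d') + (tp / (tp + tm)) *: (f + tm *: - d').
  by apply: sum_of_extreme_rays_conic; rewrite // divr_gt0 ?addr_gt0.
rewrite !scalerDr !scalerA scalerN mulrAC [tp / _ * _]mulrAC [tm * tp]mulrC.
by rewrite addrACA subrr addr0 -scalerDl -mulrDl addrC mulfV ?scale1r.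
Qed.

Lemma dual_cone_sum_of_extreme_rays f : dual_cone f -> sum_of_extreme_rays f.
Proof.
move=> hf; apply: (@sum_of_extreme_rays_dominated_free (\dim {:'cV[R]_n})) => // s fs _.
by rewrite -(eqP fs); apply/dimvS/subvf.
Qed.

End PointedDual.
End DualCone.

Section Effects.
Variables (R : realType) (n : nat) (K : set 'rV[R]_n) (u : 'cV[R]_n).
Implicit Types (e f g : 'cV[R]_n) (s : 'rV[R]_n).

Lemma fnorm_has_sup e s0 :
  is_effect K u e -> states K u s0 -> has_sup [set `|ev e s| | s in states K u].
Proof.
move=> he hs0; split; first by exists `|ev e s0|, s0.
by exists 1 => _ [s /he /andP[e0 e1] <-]; rewrite ger0_norm.
Qed.

Lemma ev_le_fnorm e s : is_effect K u e -> states K u s -> `|ev e s| <= fnorm K u e.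
Proof. by move=> he hs; apply: sup_upper_bound; [exact: fnorm_has_sup hs | exists s]. Qed.

Lemma fnorm_le f (b : R) s0 :
  states K u s0 -> (forall s, states K u s -> `|ev f s| <= b) -> fnorm K u f <= b.
Proof. by move=> hs0 hb; apply: ge_sup => [|_ [s /hb le <-]]; first exists `|ev f s0|, s0. Qed.

Lemma fnorm0 s0 : states K u s0 -> fnorm K u 0 = 0.
Proof.
move=> hs0; have eff0 : is_effect K u 0 by move=> s _; rewrite ev0l lexx ler01.
apply/le_anti/andP; split; last by have := ev_le_fnorm eff0 hs0; rewrite ev0l normr0.
by apply: fnorm_le hs0 _ => s _; rewrite ev0l normr0.
Qed.

Lemma fnorm_sum_le s0 (r : seq 'cV[R]_n) :
  states K u s0 -> (forall g, g \in r -> is_effect K u g) ->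
  fnorm K u (\sum_(g <- r) g) <= \sum_(g <- r) fnorm K u g.
Proof.
move=> hs0 hr; apply: fnorm_le hs0 _ => s hs.
rewrite ev_suml (le_trans (ler_norm_sum _ _ _)) //.
rewrite big_seq_cond [leRHS]big_seq_cond; apply: ler_sum => g /andP[gr _].
exact: ev_le_fnorm (hr g gr) hs.
Qed.

Lemma scaled_effect_fnorm_le e s0 (a : R) :
  states K u s0 -> 0 <= a -> is_effect K u (a *: e) -> a * fnorm K u e <= 1.
Proof.
move=> hs0 a0 hae; have [->|an0] := eqVneq a 0; first by rewrite mul0r ler01.
have a_gt0 : 0 < a by rewrite lt0r an0.
rewrite mulrC -ler_pdivlMr // div1r; apply: fnorm_le hs0 _ => s hs.
have /andP[ae0 ae1] := hae s hs; move: ae0 ae1; rewrite evZl => ae0 ae1.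
have es0 : 0 <= ev e s by rewrite -(pmulr_rge0 _ a_gt0).
by rewrite ger0_norm // -(ler_pM2l a_gt0) mulfV ?gt_eqF.
Qed.

Lemma effect_le e g :
  dual_cone K g -> dual_cone K (e - g) -> is_effect K u e -> is_effect K u g.
Proof.
move=> hg heg he s hs; have /andP[e0 e1] := he s hs.
by have := hg s hs.1; have := heg s hs.1; rewrite evBl => *; apply/andP; split; lra.
Qed.

Lemma effect_summands e (r : seq 'cV[R]_n) :
  is_effect K u e -> e = \sum_(g <- r) g -> (forall g, g \in r -> dual_cone K g) ->
  forall g, g \in r -> is_effect K u g.
Proof.
move=> he er hr g gr; apply: effect_le (hr g gr) _ he.
rewrite er (big_rem g gr) /= addrAC subrr add0r.
by apply: dual_cone_sum => h /mem_rem /hr.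
Qed.

Lemma ev_measurement_sum (Omega : finType) (M : Omega -> 'cV[R]_n) s :
  is_measurement K u M -> states K u s -> \sum_x ev (M x) s = 1.
Proof. by move=> [_ Msum] [_ us]; rewrite -ev_suml Msum. Qed.

Lemma decoding_power_ge0 (Omega : finType) (M : Omega -> 'cV[R]_n) s0 :
  states K u s0 -> is_measurement K u M -> 0 <= decoding_power K u M.
Proof.
move=> hs0 [Meff _]; apply: sumr_ge0 => x _.
exact: le_trans (normr_ge0 _) (ev_le_fnorm (Meff x) hs0).
Qed.

Section StrictlyPositiveUnit.
Hypothesis hK : gpt_cone K u.

Lemma states_normalize x : K x -> x != 0 -> states K u ((ev u x)^-1 *: x).
Proof.
case: hK => _ [_ _ KZ] _ _ upos Kx x0; have ux := upos x Kx x0.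
split; first by apply: KZ => //; rewrite invr_ge0 ltW.
by rewrite evZr mulVf ?gt_eqF.
Qed.

Lemma effect_dual_cone e : is_effect K u e -> dual_cone K e.
Proof.
move=> he x Kx; have [->|x0] := eqVneq x 0; first by rewrite ev0r.
have /he /andP[+ _] := states_normalize Kx x0; rewrite evZr pmulr_rge0 //.
by case: hK => _ _ _ _ upos; rewrite invr_gt0 upos.
Qed.

Lemma fnorm_gt0 e : is_effect K u e -> e != 0 -> 0 < fnorm K u e.
Proof.
move=> he e0; have he' := effect_dual_cone he.
have [x0 Kx0 faithful] := exists_faithful_point hK.
have ex0 : 0 < ev e x0.
  by rewrite lt0r he' // andbT; apply: contra e0 => /eqP /(faithful _ he') ->.
have x00 : x0 != 0 by apply: contraTneq ex0 => ->; rewrite ev0r ltxx.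
apply: lt_le_trans (ev_le_fnorm he (states_normalize Kx0 x00)).
rewrite evZr normrM mulr_gt0 ?normr_gt0 ?gt_eqF // invr_gt0.
by case: hK => _ _ _ _ upos; apply: upos.
Qed.

Lemma indecomposable_extreme_ray e : is_indecomposable K u e -> extreme_ray K e.
Proof.
move=> [he [e0 indec]]; split => //; first exact: effect_dual_cone.
move=> g h hg hh egh.
have eg : is_effect K u g by apply: effect_le hg _ he; rewrite egh addrAC subrr add0r.
have eh : is_effect K u h by apply: effect_le hh _ he; rewrite egh addrK.
have [->|g0] := eqVneq g 0; first by exists 0; rewrite ?scale0r.
have [h0|h0] := eqVneq h 0; first by exists 1; rewrite ?scale1r // egh h0 addr0.
have [c1 [c2 [c1p [_ [ec1 _]]]]] := indec g h eg eh g0 h0 egh.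
exists c1^-1; first by rewrite invr_ge0 ltW.
by rewrite ec1 scalerA mulVf ?scale1r ?gt_eqF.
Qed.

Lemma extreme_ray_indecomposable e :
  is_effect K u e -> extreme_ray K e -> is_indecomposable K u e.
Proof.
move=> he [e0 _ xe]; split => //; split => // e1 e2 he1 he2 e10 e20 ee.
have [c c0 ce] := xe _ _ (effect_dual_cone he1) (effect_dual_cone he2) ee.
have [c' c'0 ce'] := xe _ _ (effect_dual_cone he2) (effect_dual_cone he1) (etrans ee (addrC _ _)).
have cn : c != 0 by apply: contraNneq e10 => c_eq0; rewrite ce c_eq0 scale0r.
have cn' : c' != 0 by apply: contraNneq e20 => c_eq0; rewrite ce' c_eq0 scale0r.
exists c^-1, c'^-1; rewrite !invr_gt0 !lt0r cn cn' c0 c'0; do 2!split => //.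
by rewrite ce ce' !scalerA !mulVf ?scale1r.
Qed.

(* An effect spanning an extreme ray and maximal on that ray is pure: in any
   convex splitting both parts lie on the ray, and maximality forces them to
   coincide with e. *)
Lemma extreme_ray_pure e :
  is_effect K u e -> extreme_ray K e ->
  (forall a : R, 0 <= a -> is_effect K u (a *: e) -> a <= 1) ->
  is_pure_effect K u e.
Proof.
move=> he [e0 _ xe] emax; split => // e1 e2 t he1 he2 /andP[t0 t1] ee.
have C1 : dual_cone K (t *: e1) by apply/dual_coneZ/effect_dual_cone; rewrite ?ltW.
have C2 : dual_cone K ((1 - t) *: e2).
  by apply/dual_coneZ/effect_dual_cone; rewrite ?subr_ge0 ?ltW.
have [c1 c10 ec1] := xe _ _ C1 C2 ee.
have [c2 c20 ec2] := xe _ _ C2 C1 (etrans ee (addrC _ _)).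
have t_gt0 : 0 < 1 - t by rewrite subr_gt0.
have e1E : e1 = (c1 / t) *: e by rewrite mulrC -scalerA -ec1 scalerA mulVf ?scale1r ?gt_eqF.
have e2E : e2 = (c2 / (1 - t)) *: e.
  by rewrite mulrC -scalerA -ec2 scalerA mulVf ?scale1r ?gt_eqF.
have le1 : c1 / t <= 1 by apply: emax; [exact: divr_ge0 c10 (ltW t0) | rewrite -e1E].
have le2 : c2 / (1 - t) <= 1 by apply: emax; [exact: divr_ge0 c20 (ltW t_gt0) | rewrite -e2E].
have sum1 : c1 + c2 = 1.
  have : (c1 + c2 - 1) *: e = 0 by rewrite !scalerDl -ec1 -ec2 -ee scaleN1r subrr.
  by move/eqP; rewrite scaler_eq0 (negPf e0) orbF subr_eq0 => /eqP.
have c1t : c1 = t by move: le1 le2; rewrite !ler_pdivrMr // !mul1r; lra.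
have c2t : c2 = 1 - t by lra.
by rewrite e1E e2E c1t c2t !mulfV ?scale1r ?gt_eqF.
Qed.

Lemma exists_indecomposable_measurement :
  exists m (M : 'I_m -> 'cV[R]_n), is_indecomposable_measurement K u M.
Proof.
have ueff : is_effect K u u by move=> s [_ ->]; rewrite ler01 lexx.
have [r [ur xr]] := dual_cone_sum_of_extreme_rays hK (effect_dual_cone ueff).
have reff : forall g, g \in r -> is_effect K u g.
  by apply: effect_summands ueff ur _ => g /xr [].
exists (size r), (fun i => r`_i); split => [|i _].
  by split; [move=> i; apply/reff/mem_nth | rewrite ur (big_nth 0) big_mkord].
by apply/extreme_ray_indecomposable; [apply/reff | apply/xr]; apply/mem_nth.
Qed.

End StrictlyPositiveUnit.
End Effects.

Section Storability.
Variables (R : realType) (n : nat) (K : set 'rV[R]_n) (u : 'cV[R]_n).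
Variables (s0 : 'rV[R]_n) (lambda0 : R).
Hypotheses (hK : gpt_cone K u) (hs0 : states K u s0).
Hypothesis pure_indecomposable_ev : forall e : 'cV[R]_n,
  is_pure_effect K u e -> is_indecomposable K u e -> ev e s0 = lambda0.

Lemma extreme_ray_effect_ev e :
  is_effect K u e -> extreme_ray K e -> ev e s0 = fnorm K u e * lambda0.
Proof.
move=> he xe; have [e0 _ _] := xe.
set N := fnorm K u e; have N_gt0 : 0 < N := fnorm_gt0 hK he e0.
have ehe : is_effect K u (N^-1 *: e).
  move=> s hs; have /andP[es0 _] := he s hs; have := ev_le_fnorm he hs.
  rewrite ger0_norm // evZl => le; apply/andP; split.
    by rewrite mulr_ge0 // invr_ge0 ltW.
  by rewrite mulrC ler_pdivrMr // mul1r.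
have emax a : 0 <= a -> is_effect K u (a *: (N^-1 *: e)) -> a <= 1.
  rewrite scalerA => a0 hae.
  have aN0 : 0 <= a / N by rewrite divr_ge0 // ltW.
  by have := scaled_effect_fnorm_le hs0 aN0 hae; rewrite -mulrA mulVf ?mulr1 ?gt_eqF.
have xeh : extreme_ray K (N^-1 *: e) by apply: extreme_rayZ; rewrite ?invr_gt0.
have := pure_indecomposable_ev (extreme_ray_pure hK ehe xeh emax)
  (extreme_ray_indecomposable hK ehe xeh).
by rewrite evZl => <-; rewrite mulrA mulfV ?mul1r ?gt_eqF.
Qed.

Lemma decoding_power_indecomposable (Omega : finType) (M : Omega -> 'cV[R]_n) :
  is_indecomposable_measurement K u M -> decoding_power K u M * lambda0 = 1.
Proof.
move=> [hM Mind]; rewrite -(ev_measurement_sum hM hs0) /decoding_power mulr_suml.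
apply: eq_bigr => x _; have [->|Mx0] := eqVneq (M x) 0.
  by rewrite (fnorm0 hs0) ev0l mul0r.
rewrite extreme_ray_effect_ev //; first exact: hM.1.
exact/indecomposable_extreme_ray/Mind.
Qed.

Lemma lambda0_gt0 : 0 < lambda0.
Proof.
have [m [M hM]] := exists_indecomposable_measurement hK.
have := decoding_power_indecomposable hM; have := decoding_power_ge0 hs0 hM.1.
by nra.
Qed.

Lemma decoding_power_le (Omega : finType) (M : Omega -> 'cV[R]_n) :
  is_measurement K u M -> decoding_power K u M * lambda0 <= 1.
Proof.
move=> hM; rewrite -(ev_measurement_sum hM hs0) /decoding_power mulr_suml.
apply: ler_sum => x _; have hMx := hM.1 x.
have [r [Mr xr]] := dual_cone_sum_of_extreme_rays hK (effect_dual_cone hK hMx).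
have reff : forall g, g \in r -> is_effect K u g.
  by apply: effect_summands hMx Mr _ => g /xr [].
rewrite {1}Mr (le_trans (ler_wpM2r (ltW lambda0_gt0) (fnorm_sum_le hs0 reff))) //.
rewrite Mr ev_suml mulr_suml big_seq_cond [leRHS]big_seq_cond.
apply: ler_sum => g /andP[gr _].
by rewrite extreme_ray_effect_ev //; [exact: reff | exact: xr].
Qed.

End Storability.

Unset Implicit Arguments.

Theorem proposition3 (R : realType) (n : nat) (K : set 'rV[R]_n) (u : 'cV[R]_n)
  (s0 : 'rV[R]_n) (lambda0 : R) :
  gpt_cone K u ->
  states K u s0 ->
  (forall e : 'cV[R]_n, is_pure_effect K u e -> is_indecomposable K u e ->
     ev e s0 = lambda0) ->
  (forall (Omega : finType) (M : Omega -> 'cV[R]_n),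
     is_indecomposable_measurement K u M ->
     decoding_power K u M = 1 / lambda0) /\
  info_storability K u = (1 / lambda0)%:E.
Proof.
move=> hK hs0 hpure; have l_gt0 := lambda0_gt0 hK hs0 hpure.
have dp_eq (Omega : finType) (M : Omega -> 'cV[R]_n) :
    is_indecomposable_measurement K u M -> decoding_power K u M = 1 / lambda0.
  by move=> hM; rewrite -(decoding_power_indecomposable hK hs0 hpure hM) mulfK ?gt_eqF.
split => //; apply/le_anti/andP; split.
  apply: ge_ereal_sup => _ [[m M] hM <-]; rewrite lee_fin ler_pdivlMr //.
  by apply: (decoding_power_le hK hs0 hpure); exact: hM.
have [m [M hM]] := exists_indecomposable_measurement hK.
apply: le_ereal_sup_tmp; exists (decoding_power K u M)%:E; last by rewrite dp_eq.
by exists (existT _ m M) => //; case: hM.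
Qed.
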